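(* Let $\Lambda$ be a canonical algebra of type $(m_1,\dots,m_n)$ and let $\mathbf d\in\mathbf P$ satisfy $\langle\mathbf d,\mathbf h\rangle=1$. Then $\mathbf d=r\mathbf h+\mathbf e(l_1,\ldots,l_n)$ for some $r\in\mathbb N$ and $l_i\in[0,m_i-1]$, $i\in[1,n]$. In particular $\langle\mathbf d,\mathbf d\rangle=1$.
   Context: $[a,b]=\{l\in\mathbb Z:a\le l\le b\}$. $\Lambda$ is the canonical algebra of type $(m_1,\dots,m_n)$ ($n\ge3$, $m_i\ge2$) over an algebraically closed field $k$: the bound quiver algebra of the quiver $\Delta$ with vertices $\Delta_0=\{0,\infty\}\cup\{(i,j):i\in[1,n],j\in[1,m_i-1]\}$, arrows $\alpha_{i,j}:(i,j)\to(i,j-1)$ ($j\in[1,m_i]$, conventions $(i,0)=0$, $(i,m_i)=\infty$), and relations $\alpha_{1,1}\cdots\alpha_{1,m_1}+\lambda_i\alpha_{2,1}\cdots\alpha_{2,m_2}-\alpha_{i,1}\cdots\alpha_{i,m_i}$, $i\in[3,n]$, for fixed pairwise distinct nonzero $\lambda_i\in k$. For $\mathbf d\in\mathbb Z^{\Delta_0}$ write $d_{i,0}=d_0$, $d_{i,m_i}=d_\infty$, $d_{i,j}=d_{(i,j)}$. The Ringel form is $\langle\mathbf d',\mathbf d''\rangle=d_0'd_0''+\sum_{i\in[1,n],j\in[1,m_i-1]}d'_{i,j}d''_{i,j}+d'_\infty d''_\infty-\sum_{i\in[1,n],j\in[1,m_i]}d'_{i,j}d''_{i,j-1}+(n-2)d'_\infty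 d''_0$. $\mathbf h$ is the vector with all coordinates $1$; $(\mathbf e_x)$ is the standard basis, $\mathbf e_{i,j}=\mathbf e_{(i,j)}$, and $\mathbf e(l_1,\dots,l_n)=\mathbf e_0+\sum_{i\in[1,n]}\sum_{j\in[1,l_i]}\mathbf e_{i,j}$. Let $\mathcal P$ be the additive closure of the indecomposable $\Lambda$-modules $X$ with $\langle\dim X,\mathbf h\rangle>0$, and $\mathbf P$ the set of dimension vectors of modules in $\mathcal P$. (It is known that $\mathbf d\in\mathbf P$ iff either $\mathbf d=0$, or $d_0>d_\infty\ge0$ and $d_{i,j}\ge d_{i,j+1}$ for all $i\in[1,n]$, $j\in[0,m_i-1]$.) *)

From mathcomp Require Import all_boot all_order all_algebra.
Set Implicit Arguments. Unset Strict Implicit. Unset Printing Implicit Defensive.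
Import Order.TTheory GRing.Theory Num.Theory.
Local Open Scope ring_scope.

(* Canonical algebra of type m = (m_1,...,m_n); arms indexed by i : 'I_n
   (arm i corresponds to the paper's arm i+1).  Vertices: 0, oo and
   (i,j) for 1 <= j <= m i - 1. *)

(* An integer vector in Z^{Delta_0}: coordinate at 0, at oo, and at (i,j).
   Only the values dmid i j with 1 <= j <= m i - 1 are meaningful. *)
Record dimvec (n : nat) := DimVec {
  d0 : int;
  dinf : int;
  dmid : 'I_n -> nat -> int }.

Definition dc (n : nat) (m : 'I_n -> nat) (d : dimvec n) (i : 'I_n) (j : nat) : int :=
  if j == 0%N then d0 d else if j == m i then dinf d else dmid d i j.

Definition dveq (n : nat) (m : 'I_n -> nat) (d d' : dimvec n) : Prop :=
  [/\ d0 d = d0 d', dinf d = dinf d' &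
      forall (i : 'I_n) (j : nat), (1 <= j <= (m i).-1)%N -> dmid d i j = dmid d' i j].

Definition hvec (n : nat) : dimvec n := DimVec 1 1 (fun _ _ => 1).

Definition zvec (n : nat) : dimvec n := DimVec 0 0 (fun _ _ => 0).

(* e(l_1,...,l_n) = e_0 + sum_i sum_{j=1}^{l_i} e_{i,j}  (for l_i <= m_i - 1). *)
Definition evec (n : nat) (l : 'I_n -> nat) : dimvec n :=
  DimVec 1 0 (fun i j => if (1 <= j <= l i)%N then 1 else 0).

Definition add_rh (n : nat) (r : nat) (d : dimvec n) : dimvec n :=
  DimVec (r%:Z + d0 d) (r%:Z + dinf d) (fun i j => r%:Z + dmid d i j).

Definition ringel (n : nat) (m : 'I_n -> nat) (d' d'' : dimvec n) : int :=
  d0 d' * d0 d''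
  + \sum_(i < n) \sum_(1 <= j < m i) dmid d' i j * dmid d'' i j
  + dinf d' * dinf d''
  - \sum_(i < n) \sum_(1 <= j < (m i).+1) dc m d' i j * dc m d'' i j.-1
  + (n%:Z - 2) * (dinf d' * d0 d'').

(* The set P of dimension vectors of modules in the additive closure of the
   indecomposables X with <dim X, h> > 0, via its known characterization. *)
Definition inP (n : nat) (m : 'I_n -> nat) (d : dimvec n) : Prop :=
  dveq m d (zvec n) \/
  ((dinf d < d0 d) /\ (0 <= dinf d) /\
   forall (i : 'I_n) (j : nat), (j < m i)%N -> dc m d i j.+1 <= dc m d i j).

From mathcomp Require Import all_boot all_order all_algebra.
From mathcomp Require Import zify ring.
Set Implicit Arguments. Unset Strict Implicit. Unset Printing Implicit Defensive.
Import Order.TTheory GRing.Theory Num.Theory.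
Local Open Scope ring_scope.

(* Since <d, h> = d_0 - d_oo, a vector d of P with <d, h> = 1 has arms that
   decrease from d_0 = r + 1 to d_oo = r, hence each arm is a single unit step
   d_{i,j} = r + [j <= l_i]; that is, d = r h + e(l).  For such a d every arm
   contributes -r(r+1) to <d, d>, and the remaining terms give
   (r+1)^2 + r^2 + (n-2) r(r+1), so <d, d> = 1. *)

(* The terms of the Ringel form coming from one arm, written with the extended
   coordinates x j = d'_{i,j} and y j = d''_{i,j}, j in [0, m]. *)
Definition arm_form (m : nat) (x y : nat -> int) : int :=
  \sum_(1 <= j < m) x j * y j - \sum_(1 <= j < m.+1) x j * y j.-1.

Lemma arm_form_unit (m : nat) (x y : nat -> int) : (0 < m)%N ->
  (forall j, y j = 1) -> arm_form m x y = - x m.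
Proof.
move=> m_gt0 y1; rewrite /arm_form big_nat_recr //=.
have sum_y1 (f : nat -> nat) :
    \sum_(1 <= j < m) x j * y (f j) = \sum_(1 <= j < m) x j.
  by apply: eq_bigr => j _; rewrite y1 mulr1.
by rewrite (sum_y1 id) (sum_y1 predn) y1 mulr1 opprD addrA subrr add0r.
Qed.

Lemma arm_form_step (m l : nat) (x : nat -> int) (r : int) : (l < m)%N ->
  (forall j, (j <= m)%N -> x j = r + (if (j <= l)%N then 1 else 0)) ->
  arm_form m x x = - (r * (r + 1)).
Proof.
move=> lt_lm xE.
have partial k : (k <= m)%N ->
    \sum_(1 <= j < k) (x j * x j - x j * x j.-1) = if (l.+1 < k)%N then - r else 0.
  elim: k => [|k IHk] le_km; first by rewrite big_geq.
  have [->|k_gt0] := eqVneq k 0%N; first by rewrite big_geq.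
  rewrite big_nat_recr /=; last by lia.
  rewrite IHk ?xE; try lia.
  by case: ifP; case: ifP; case: ifP; case: ifP => *; (lia || ring).
rewrite /arm_form big_nat_recr /=; last by lia.
rewrite opprD addrA -sumrB partial // !xE; try lia.
by case: ifP; case: ifP; case: ifP => *; (lia || ring).
Qed.

Section NonincreasingArm.

Variables (m : nat) (x : nat -> int).
Hypothesis x_nonincr : forall j, (j < m)%N -> x j.+1 <= x j.

Lemma nonincr_le (j k : nat) : (j <= k <= m)%N -> x k <= x j.
Proof.
case/andP=> le_jk; rewrite -(subnKC le_jk).
elim: (k - j)%N => [|s IHs] le_km; first by rewrite addn0.
rewrite addnS; apply: le_trans (IHs _); [apply: x_nonincr|]; lia.
Qed.

Lemma unit_drop_step (r : int) : x 0%N = r + 1 -> x m = r ->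
  exists l, (l < m)%N /\
    forall j, (j <= m)%N -> x j = r + (if (j <= l)%N then 1 else 0).
Proof.
move=> x0 xm.
have x_between j : (j <= m)%N -> r <= x j <= r + 1.
  move=> le_jm; rewrite -{1}xm -x0 !nonincr_le //; lia.
pose P j := (j <= m)%N && (x j == r + 1).
have exP : exists j, P j by exists 0%N; rewrite /P x0 eqxx.
have ubP j : P j -> (j <= m)%N by case/andP.
case: (ex_maxnP exP ubP) => l /andP[le_lm /eqP xl] max_l.
have lt_lm : (l < m)%N.
  by rewrite ltn_neqAle le_lm andbT; apply: contra_eq_neq xl => ->; rewrite xm; lia.
exists l; split=> // j le_jm; case: ifP => [le_jl|gt_jl].
  have : x l <= x j by rewrite nonincr_le ?le_jl.
  by move: (x_between j le_jm); rewrite xl; lia.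
have /negP xj : ~~ P j by apply: contraFN gt_jl => /max_l.
by move: xj (x_between j le_jm); rewrite /P le_jm /=; lia.
Qed.

End NonincreasingArm.

Section DimensionVectors.

Variables (n : nat) (m : 'I_n -> nat).
Implicit Types (d e : dimvec n) (i : 'I_n).

Lemma dc_mid d i j : (0 < j < m i)%N -> dc m d i j = dmid d i j.
Proof.
case/andP=> j_gt0 lt_jm.
by rewrite /dc (negPf (lt0n_neq0 j_gt0)) (ltn_eqF lt_jm).
Qed.

Lemma dc_top d i : (0 < m i)%N -> dc m d i (m i) = dinf d.
Proof. by rewrite /dc eqxx lt0n => /negPf ->. Qed.

Lemma ringelE d e : ringel m d e =
  d0 d * d0 e + dinf d * dinf e + (n%:Z - 2) * (dinf d * d0 e)
  + \sum_(i < n) arm_form (m i) (dc m d i) (dc m e i).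
Proof.
rewrite /ringel /arm_form sumrB.
have mid_dc i : \sum_(1 <= j < m i) dmid d i j * dmid e i j
              = \sum_(1 <= j < m i) dc m d i j * dc m e i j.
  by apply: eq_big_nat => j j_mid; rewrite !dc_mid.
under eq_bigr do rewrite mid_dc.
by ring.
Qed.

Hypothesis m_gt0 : forall i, (0 < m i)%N.

Lemma ringel_hvec d : ringel m d (hvec n) = d0 d - dinf d.
Proof.
rewrite ringelE /=.
have arm_h i : arm_form (m i) (dc m d i) (dc m (hvec n) i) = - dinf d.
  rewrite arm_form_unit ?dc_top //.
  by move=> j; rewrite /dc; case: (j == 0%N); case: (j == m i).
under eq_bigr do rewrite arm_h.
by rewrite sumr_const card_ord -mulr_natr natz; ring.
Qed.

Definition step_profile d (r : nat) (l : 'I_n -> nat) : Prop :=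
  forall i j, (j <= m i)%N -> dc m d i j = r%:Z + (if (j <= l i)%N then 1 else 0).

Lemma step_profile_add_rh_evec (r : nat) (l : 'I_n -> nat) :
  (forall i, l i < m i)%N -> step_profile (add_rh r (evec l)) r l.
Proof.
move=> lt_lm i j le_jm; rewrite /dc /=.
case: eqP => [->|/eqP j_neq0]; first by [].
case: eqP => [->|/eqP j_neqm]; first by rewrite leqNgt lt_lm addr0.
by rewrite lt0n j_neq0.
Qed.

Lemma inP_step_profile d : inP m d -> d0 d = dinf d + 1 ->
  exists (r : nat) (l : 'I_n -> nat), (forall i, l i < m i)%N /\ step_profile d r l.
Proof.
move=> dP d0E; case: dP => [[d0_0 dinf_0 _]|[_ [dinf_ge0 d_nonincr]]].
  by move: d0E; rewrite d0_0 dinf_0.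
have arm_step i : exists l, (l < m i)%N /\ forall j, (j <= m i)%N ->
    dc m d i j = dinf d + (if (j <= l)%N then 1 else 0).
  exact (unit_drop_step (d_nonincr i) d0E (dc_top d (m_gt0 i))).
have [l armE] := fin_all_exists arm_step.
exists `|dinf d|%N, l; split=> [i|i j le_jm]; first exact: (armE i).1.
by rewrite gez0_abs // (armE i).2.
Qed.

Hypothesis n_gt0 : (0 < n)%N.

Lemma dveq_step_profile d e (r : nat) (l : 'I_n -> nat) :
  step_profile d r l -> step_profile e r l -> dveq m d e.
Proof.
move=> dE eE; pose i0 := Ordinal n_gt0.
split; first by rewrite -[d0 d]/(dc m d i0 0) -[d0 e]/(dc m e i0 0) dE ?eE.
  by rewrite -(dc_top d (m_gt0 i0)) -(dc_top e (m_gt0 i0)) dE ?eE.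
move=> i j j_mid; rewrite -!dc_mid ?dE ?eE //; lia.
Qed.

Lemma ringel_step_profile d (r : nat) (l : 'I_n -> nat) :
  (forall i, l i < m i)%N -> step_profile d r l -> ringel m d d = 1.
Proof.
move=> lt_lm dE; pose i0 := Ordinal n_gt0.
have d0E : d0 d = r%:Z + 1 by rewrite -[d0 d]/(dc m d i0 0) dE.
have dinfE : dinf d = r%:Z.
  by rewrite -(dc_top d (m_gt0 i0)) dE // leqNgt lt_lm addr0.
rewrite ringelE.
under eq_bigr => i _ do rewrite (arm_form_step (lt_lm i) (dE i)).
by rewrite sumr_const card_ord -mulr_natr natz d0E dinfE; ring.
Qed.

End DimensionVectors.

Theorem lemma1p6 (n : nat) (m : 'I_n -> nat) (d : dimvec n) :
  (3 <= n)%N ->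
  (forall i, 2 <= m i)%N ->
  inP m d ->
  ringel m d (hvec n) = 1 ->
  (exists (r : nat) (l : 'I_n -> nat),
      (forall i, l i <= (m i).-1)%N /\ dveq m d (add_rh r (evec l)))
  /\ ringel m d d = 1.
Proof.
move=> n_ge3 m_ge2 dP dh.
have n_gt0 : (0 < n)%N by apply: leq_trans n_ge3.
have m_gt0 i : (0 < m i)%N by apply: leq_trans (m_ge2 i).
have d0E : d0 d = dinf d + 1 by rewrite ringel_hvec // in dh; rewrite -dh; ring.
have [r [l [lt_lm dE]]] := inP_step_profile m_gt0 dP d0E.
split; last exact: ringel_step_profile dE.
exists r, l; split=> [i|]; first by rewrite -ltnS prednK.
exact: dveq_step_profile dE (step_profile_add_rh_evec _ lt_lm).
Qed.
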